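(* The distributive $\lambda$-calculus is confluent: for all terms $t,s_1,s_2$, if $t\to_{\mathsf{dist}}^* s_1$ and $t\to_{\mathsf{dist}}^* s_2$, then there exists a term $u$ such that $s_1\to_{\mathsf{dist}}^* u$ and $s_2\to_{\mathsf{dist}}^* u$.
   Context: Terms of the distributive $\lambda$-calculus are given by the grammar $t,s,u ::= x \mid \lambda x.t \mid ts \mid \langle t,s\rangle \mid \pi_1 t \mid \pi_2 t$, considered up to $\alpha$-renaming; $t\{x:=s\}$ denotes capture-avoiding substitution. The top-level rules are: $(\lambda x.t)s \mapsto_\beta t\{x:=s\}$; $\pi_i\langle t_1,t_2\rangle \mapsto_{\pi_i} t_i$ for $i=1,2$; $\langle t,s\rangle u \mapsto_{@_\times} \langle tu, su\rangle$; $\pi_i(\lambda x.t)\mapsto_{\pi_\lambda} \lambda x.\pi_i t$ for $i=1,2$. The relation $\to_{\mathsf{dist}}$ is the closure of the union of these rules under all term constructors (i.e. a rule may be applied to any subterm); $\to_{\mathsf{dist}}^*$ is its reflexive-transitive closure. *)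

(* Terms of the distributive lambda-calculus, up to alpha-renaming,
   represented with de Bruijn indices (so alpha-equivalent terms are equal). *)
From Stdlib Require Import Arith Relations.

Inductive term : Type :=
| Var : nat -> term
| Lam : term -> term
| App : term -> term -> term
| Pair : term -> term -> term
| Proj1 : term -> term
| Proj2 : term -> term.

Fixpoint lift (d c : nat) (t : term) : term :=
  match t with
  | Var n => if Nat.ltb n c then Var n else Var (n + d)
  | Lam t => Lam (lift d (S c) t)
  | App t s => App (lift d c t) (lift d c s)
  | Pair t s => Pair (lift d c t) (lift d c s)
  | Proj1 t => Proj1 (lift d c t)
  | Proj2 t => Proj2 (lift d c t)
  end.

(* subst k s t : capture-avoiding substitution of s for index k in t,
   decrementing the free indices above k (the binder is removed). *)
Fixpoint subst (k : nat) (s : term) (t : term) : term :=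
  match t with
  | Var n =>
      match Nat.compare n k with
      | Lt => Var n
      | Eq => lift k 0 s
      | Gt => Var (pred n)
      end
  | Lam t => Lam (subst (S k) s t)
  | App t1 t2 => App (subst k s t1) (subst k s t2)
  | Pair t1 t2 => Pair (subst k s t1) (subst k s t2)
  | Proj1 t => Proj1 (subst k s t)
  | Proj2 t => Proj2 (subst k s t)
  end.

(* t{x:=s} for the body t of \x.t *)
Definition beta_subst (t s : term) : term := subst 0 s t.

Inductive top_step : term -> term -> Prop :=
| R_beta : forall t s, top_step (App (Lam t) s) (beta_subst t s)
| R_pi1 : forall t1 t2, top_step (Proj1 (Pair t1 t2)) t1
| R_pi2 : forall t1 t2, top_step (Proj2 (Pair t1 t2)) t2
| R_app_pair : forall t s u, top_step (App (Pair t s) u) (Pair (App t u) (App s u))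
| R_pi1_lam : forall t, top_step (Proj1 (Lam t)) (Lam (Proj1 t))
| R_pi2_lam : forall t, top_step (Proj2 (Lam t)) (Lam (Proj2 t)).

Inductive dist_step : term -> term -> Prop :=
| S_top : forall t t', top_step t t' -> dist_step t t'
| S_lam : forall t t', dist_step t t' -> dist_step (Lam t) (Lam t')
| S_appl : forall t t' s, dist_step t t' -> dist_step (App t s) (App t' s)
| S_appr : forall t s s', dist_step s s' -> dist_step (App t s) (App t s')
| S_pairl : forall t t' s, dist_step t t' -> dist_step (Pair t s) (Pair t' s)
| S_pairr : forall t s s', dist_step s s' -> dist_step (Pair t s) (Pair t s')
| S_proj1 : forall t t', dist_step t t' -> dist_step (Proj1 t) (Proj1 t')
| S_proj2 : forall t t', dist_step t t' -> dist_step (Proj2 t) (Proj2 t').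

Definition dist_star : term -> term -> Prop := clos_refl_trans term dist_step.

(* Takahashi's method.  Parallel reduction [par], which contracts simultaneously
   any redexes already present in a term, lies between one step and many steps of
   [dist_step], so both relations have the same reflexive-transitive closure.  The
   complete development [develop t], contracting every redex present in [t], is
   reachable in one parallel step from every parallel reduct of [t] (the triangle
   property).  Hence [par] has the diamond property, which passes to its closure.
   The method applies because the rules are left-linear and their left-hand
   sides do not overlap. *)

From Stdlib Require Import Relations Arith Lia.

Section AbstractConfluence.

Variable A : Type.

Definition commute (R S : relation A) : Prop :=
  forall t s1 s2, R t s1 -> S t s2 -> exists u, S s1 u /\ R s2 u.

Definition diamond (R : relation A) : Prop := commute R R.

Definition confluent (R : relation A) : Prop := diamond (clos_refl_trans A R).

Lemma commute_sym (R S : relation A) : commute R S -> commute S R.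
Proof.
  intros H t s1 s2 H1 H2. destruct (H t s2 s1 H2 H1) as [u [Hu2 Hu1]]. eauto.
Qed.

Lemma commute_clos_rt_l (R S : relation A) :
  commute R S -> commute (clos_refl_trans A R) S.
Proof.
  intros Hcom t s1 s2 H1. revert s2.
  induction H1 as [t s1 H1 | t | t m s1 _ IH1 _ IH2]; intros s2 H2.
  - destruct (Hcom t s1 s2 H1 H2) as [u [Hu1 Hu2]].
    exists u; split; [assumption | apply rt_step; assumption].
  - exists s2; split; [assumption | apply rt_refl].
  - destruct (IH1 s2 H2) as [v [Hv1 Hv2]].
    destruct (IH2 v Hv1) as [u [Hu1 Hu2]].
    exists u; split; [assumption | eapply rt_trans; eassumption].
Qed.

Lemma diamond_confluent (R : relation A) : diamond R -> confluent R.
Proof.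
  intros H. apply commute_clos_rt_l, commute_sym, commute_clos_rt_l, H.
Qed.

Lemma diamond_of_triangle (R : relation A) (f : A -> A) :
  (forall t t', R t t' -> R t' (f t)) -> diamond R.
Proof. intros Htri t s1 s2 H1 H2. exists (f t); split; auto. Qed.

Lemma clos_rt_monotone (R S : relation A) :
  inclusion A R S -> inclusion A (clos_refl_trans A R) (clos_refl_trans A S).
Proof.
  intros HRS x y H.
  induction H; [apply rt_step, HRS | apply rt_refl | eapply rt_trans]; eassumption.
Qed.

Lemma clos_rt_map (R : relation A) (f : A -> A) :
  (forall x y, R x y -> R (f x) (f y)) ->
  forall x y, clos_refl_trans A R x y -> clos_refl_trans A R (f x) (f y).
Proof.
  intros Hf x y H.
  induction H; [apply rt_step, Hf | apply rt_refl | eapply rt_trans]; eassumption.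
Qed.

Lemma confluent_of_sandwich (R S : relation A) :
  inclusion A R S -> inclusion A S (clos_refl_trans A R) -> diamond S ->
  confluent R.
Proof.
  intros HRS HSR Hdia t s1 s2 H1 H2.
  destruct (diamond_confluent S Hdia t s1 s2
              (clos_rt_monotone R S HRS _ _ H1) (clos_rt_monotone R S HRS _ _ H2))
    as [u [Hu1 Hu2]].
  exists u; split; apply clos_rt_idempotent, (clos_rt_monotone S); assumption.
Qed.

End AbstractConfluence.

Ltac index_cases :=
  repeat (first [ progress simpl
    | match goal with
      | |- context [Nat.ltb ?a ?b] => destruct (Nat.ltb_spec a b)
      | |- context [Nat.compare ?a ?b] => destruct (Nat.compare_spec a b)
      end ]); try (f_equal; lia); try lia.

Lemma lift_lift_comm t d k i j : i <= j ->
  lift d (j + k) (lift k i t) = lift k i (lift d j t).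
Proof.
  revert i j; induction t; intros i j Hij; simpl; try (f_equal; auto; fail).
  - index_cases.
  - f_equal; apply (IHt (S i) (S j)); lia.
Qed.

Lemma lift_lift_merge t j k c i : c <= i <= c + k ->
  lift j i (lift k c t) = lift (j + k) c t.
Proof.
  revert c i; induction t; intros c i Hci; simpl; try (f_equal; auto; fail).
  - index_cases.
  - f_equal; apply IHt; lia.
Qed.

Lemma subst_lift_absorb t u j m c : c <= j <= c + m ->
  subst j u (lift (S m) c t) = lift m c t.
Proof.
  revert j c; induction t; intros j c Hjc; simpl; try (f_equal; auto; fail).
  - index_cases.
  - f_equal; apply IHt; lia.
Qed.

Lemma lift_subst_comm t s d k c :
  lift d (k + c) (subst k s t) = subst k (lift d c s) (lift d (S (k + c)) t).
Proof.
  revert k; induction t; intros k; simpl; try (f_equal; auto; fail).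
  - index_cases. subst. rewrite Nat.add_comm. apply (lift_lift_comm s d k 0 c); lia.
  - f_equal; apply (IHt (S k)).
Qed.

Lemma subst_lift_comm t s j k i : i <= k ->
  subst (j + k) s (lift j i t) = lift j i (subst k s t).
Proof.
  revert k i; induction t; intros k i Hik; simpl; try (f_equal; auto; fail).
  - index_cases. subst. symmetry; apply lift_lift_merge; lia.
  - f_equal. rewrite <- Nat.add_succ_r. apply IHt; lia.
Qed.

Lemma subst_subst_comm t u s j k :
  subst (j + k) s (subst j u t) = subst j (subst k s u) (subst (S (j + k)) s t).
Proof.
  revert j; induction t; intros j; simpl; try (f_equal; auto; fail).
  - index_cases.
    + subst. apply (subst_lift_comm u s j k 0); lia.
    + subst. symmetry. apply (subst_lift_absorb s (subst k s u) j (j + k) 0); lia.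
  - f_equal; apply (IHt (S j)).
Qed.

Inductive par : term -> term -> Prop :=
| P_var n : par (Var n) (Var n)
| P_lam t t' : par t t' -> par (Lam t) (Lam t')
| P_app t t' s s' : par t t' -> par s s' -> par (App t s) (App t' s')
| P_pair t t' s s' : par t t' -> par s s' -> par (Pair t s) (Pair t' s')
| P_proj1 t t' : par t t' -> par (Proj1 t) (Proj1 t')
| P_proj2 t t' : par t t' -> par (Proj2 t) (Proj2 t')
| P_beta t t' s s' : par t t' -> par s s' -> par (App (Lam t) s) (subst 0 s' t')
| P_pi1 t t' s : par t t' -> par (Proj1 (Pair t s)) t'
| P_pi2 t s s' : par s s' -> par (Proj2 (Pair t s)) s'
| P_app_pair t t' s s' u u' : par t t' -> par s s' -> par u u' ->
    par (App (Pair t s) u) (Pair (App t' u') (App s' u'))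
| P_pi1_lam t t' : par t t' -> par (Proj1 (Lam t)) (Lam (Proj1 t'))
| P_pi2_lam t t' : par t t' -> par (Proj2 (Lam t)) (Lam (Proj2 t')).

Lemma par_refl t : par t t.
Proof. induction t; constructor; assumption. Qed.

Lemma par_lift a b d c : par a b -> par (lift d c a) (lift d c b).
Proof.
  intros H; revert c; induction H; intros c; simpl; try (constructor; auto; fail).
  - apply par_refl.
  - rewrite (lift_subst_comm t' s' d 0 c : lift d c _ = _); constructor; auto.
Qed.

Lemma par_subst a b u u' k : par a b -> par u u' -> par (subst k u a) (subst k u' b).
Proof.
  intros H Hu; revert k; induction H; intros k; simpl; try (constructor; auto; fail).
  - destruct (Nat.compare n k); [apply par_lift, Hu | constructor ..].
  - rewrite (subst_subst_comm t' s' u' 0 k : subst k _ _ = _); constructor; auto.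
Qed.

Fixpoint develop (t : term) : term :=
  match t with
  | Var n => Var n
  | Lam a => Lam (develop a)
  | App (Lam a) b => subst 0 (develop b) (develop a)
  | App (Pair a1 a2) b =>
      Pair (App (develop a1) (develop b)) (App (develop a2) (develop b))
  | App a b => App (develop a) (develop b)
  | Pair a b => Pair (develop a) (develop b)
  | Proj1 (Pair a1 _) => develop a1
  | Proj1 (Lam a) => Lam (Proj1 (develop a))
  | Proj1 a => Proj1 (develop a)
  | Proj2 (Pair _ a2) => develop a2
  | Proj2 (Lam a) => Lam (Proj2 (develop a))
  | Proj2 a => Proj2 (develop a)
  end.

Lemma par_lam_inv a t : par (Lam a) t -> exists a', t = Lam a' /\ par a a'.
Proof. intros H; inversion H; eauto. Qed.

Lemma par_pair_inv a b t : par (Pair a b) t ->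
  exists a' b', t = Pair a' b' /\ par a a' /\ par b b'.
Proof. intros H; inversion H; eauto. Qed.

Lemma par_develop_lam_inv a t : par (Lam a) t -> par t (Lam (develop a)) ->
  exists a', t = Lam a' /\ par a' (develop a).
Proof.
  intros H Hdev. destruct (par_lam_inv _ _ H) as [a' [-> _]].
  destruct (par_lam_inv _ _ Hdev) as [? [[= <-] Ha']]. eauto.
Qed.

Lemma par_develop_pair_inv a b t :
  par (Pair a b) t -> par t (Pair (develop a) (develop b)) ->
  exists a' b', t = Pair a' b' /\ par a' (develop a) /\ par b' (develop b).
Proof.
  intros H Hdev. destruct (par_pair_inv _ _ _ H) as [a' [b' [-> _]]].
  destruct (par_pair_inv _ _ _ Hdev) as [? [? [[= <- <-] [Ha' Hb']]]]. eauto.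
Qed.

Lemma par_develop t t' : par t t' -> par t' (develop t).
Proof.
  induction 1; simpl; try (constructor; assumption).
  - destruct t; try (constructor; assumption).
    + destruct (par_develop_lam_inv _ _ H IHpar1) as [a' [-> Ha']].
      constructor; assumption.
    + destruct (par_develop_pair_inv _ _ _ H IHpar1) as [a' [b' [-> [Ha' Hb']]]].
      constructor; assumption.
  - destruct t; try (constructor; assumption).
    + destruct (par_develop_lam_inv _ _ H IHpar) as [a' [-> Ha']].
      constructor; assumption.
    + destruct (par_develop_pair_inv _ _ _ H IHpar) as [a' [b' [-> [Ha' Hb']]]].
      constructor; assumption.
  - destruct t; try (constructor; assumption).
    + destruct (par_develop_lam_inv _ _ H IHpar) as [a' [-> Ha']].
      constructor; assumption.
    + destruct (par_develop_pair_inv _ _ _ H IHpar) as [a' [b' [-> [Ha' Hb']]]].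
      constructor; assumption.
  - apply par_subst; assumption.
  - assumption.
  - assumption.
  - do 2 constructor; assumption.
  - do 2 constructor; assumption.
  - do 2 constructor; assumption.
Qed.

Lemma dist_star_lam a a' : dist_star a a' -> dist_star (Lam a) (Lam a').
Proof. apply clos_rt_map, S_lam. Qed.

Lemma dist_star_proj1 a a' : dist_star a a' -> dist_star (Proj1 a) (Proj1 a').
Proof. apply clos_rt_map, S_proj1. Qed.

Lemma dist_star_proj2 a a' : dist_star a a' -> dist_star (Proj2 a) (Proj2 a').
Proof. apply clos_rt_map, S_proj2. Qed.

Lemma dist_star_app a a' b b' :
  dist_star a a' -> dist_star b b' -> dist_star (App a b) (App a' b').
Proof.
  intros Ha Hb. apply rt_trans with (App a' b).
  - apply (clos_rt_map _ _ (fun x => App x b)); [intros x y; apply S_appl | assumption].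
  - apply (clos_rt_map _ _ (App a')); [intros x y; apply S_appr | assumption].
Qed.

Lemma dist_star_pair a a' b b' :
  dist_star a a' -> dist_star b b' -> dist_star (Pair a b) (Pair a' b').
Proof.
  intros Ha Hb. apply rt_trans with (Pair a' b).
  - apply (clos_rt_map _ _ (fun x => Pair x b)); [intros x y; apply S_pairl | assumption].
  - apply (clos_rt_map _ _ (Pair a')); [intros x y; apply S_pairr | assumption].
Qed.

Lemma dist_step_par t t' : dist_step t t' -> par t t'.
Proof.
  induction 1 as [t t' Htop | | | | | | |]; try (constructor; auto using par_refl).
  destruct Htop; constructor; apply par_refl.
Qed.

Lemma top_step_dist_star t t' : top_step t t' -> dist_star t t'.
Proof. intros H; apply rt_step, S_top, H. Qed.

Lemma par_dist_star t t' : par t t' -> dist_star t t'.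
Proof.
  induction 1.
  - apply rt_refl.
  - apply dist_star_lam; assumption.
  - apply dist_star_app; assumption.
  - apply dist_star_pair; assumption.
  - apply dist_star_proj1; assumption.
  - apply dist_star_proj2; assumption.
  - apply rt_trans with (App (Lam t') s').
    + apply dist_star_app; [apply dist_star_lam |]; assumption.
    + apply top_step_dist_star, R_beta.
  - apply rt_trans with (Proj1 (Pair t' s)).
    + apply dist_star_proj1, dist_star_pair; [assumption | apply rt_refl].
    + apply top_step_dist_star, R_pi1.
  - apply rt_trans with (Proj2 (Pair t s')).
    + apply dist_star_proj2, dist_star_pair; [apply rt_refl | assumption].
    + apply top_step_dist_star, R_pi2.
  - apply rt_trans with (App (Pair t' s') u').
    + apply dist_star_app; [apply dist_star_pair |]; assumption.
    + apply top_step_dist_star, R_app_pair.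
  - apply rt_trans with (Proj1 (Lam t')).
    + apply dist_star_proj1, dist_star_lam; assumption.
    + apply top_step_dist_star, R_pi1_lam.
  - apply rt_trans with (Proj2 (Lam t')).
    + apply dist_star_proj2, dist_star_lam; assumption.
    + apply top_step_dist_star, R_pi2_lam.
Qed.

Theorem theorem1 : forall t s1 s2 : term,
  dist_star t s1 -> dist_star t s2 ->
  exists u : term, dist_star s1 u /\ dist_star s2 u.
Proof.
  apply (confluent_of_sandwich term dist_step par).
  - exact dist_step_par.
  - exact par_dist_star.
  - exact (diamond_of_triangle term par develop par_develop).
Qed.
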